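(* Let $s\ge1$ and $B\in\mathbb{F}_2^{s\times s}$, and define \[ H_X(B)=[\,B\otimes I_s \mid I_s\otimes B^{\mathsf T}\,],\qquad H_Z(B)=[\,I_s\otimes B \mid B^{\mathsf T}\otimes I_s\,]. \] If the Tanner graph of $B$ has no 4-cycles and no simple 6-cycles, then the Tanner graphs of $H_X(B)$ and of $H_Z(B)$ also have no 4-cycles and no simple 6-cycles.
   Context: $\otimes$ denotes the Kronecker product and $I_s$ the $s\times s$ identity over $\mathbb{F}_2$. The Tanner graph of a binary matrix $H$ is the bipartite graph whose vertices are the rows (check nodes) and columns (variable nodes) of $H$, with row $r$ adjacent to column $c$ iff $H_{rc}=1$. A simple $2\ell$-cycle is a cycle in this graph of length $2\ell$ with all vertices distinct. *)

From HB Require Import structures.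
From mathcomp Require Import all_boot all_algebra.
From mathcomp Require Export mxtens.
Set Implicit Arguments. Unset Strict Implicit. Unset Printing Implicit Defensive.
Import GRing.Theory.
Local Open Scope ring_scope.

(* Binary matrices are matrices over 'F_2; the Kronecker product A (x) B is
   mathcomp-real-closed's tensmx (notation A *t B), whose (i1*p+i2, j1*q+j2)
   entry is A i1 j1 * B i2 j2 (the standard Kronecker convention). *)

Definition tanner_adj {m n : nat} (H : 'M['F_2]_(m, n)) (r : 'I_m) (c : 'I_n) : bool :=
  H r c == 1.

(* The Tanner graph of H has a simple cycle of length 2l (l >= 2):
   distinct check nodes r_0..r_{l-1}, distinct variable nodes c_0..c_{l-1},
   with the cycle r_0 - c_0 - r_1 - c_1 - ... - r_{l-1} - c_{l-1} - r_0. *)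
Definition has_simple_cycle {m n : nat} (l : nat) (H : 'M['F_2]_(m, n)) : Prop :=
  exists (r : 'I_l -> 'I_m) (c : 'I_l -> 'I_n),
    injective r /\ injective c /\
    forall i : 'I_l, tanner_adj H (r i) (c i) /\
      tanner_adj H (r (ordS i)) (c i).

Definition no_4_6_cycles {m n : nat} (H : 'M['F_2]_(m, n)) : Prop :=
  ~ has_simple_cycle 2 H /\ ~ has_simple_cycle 3 H.

Definition HX {s : nat} (B : 'M['F_2]_s) : 'M['F_2]_(s * s, s * s + s * s) :=
  row_mx (B *t (1%:M : 'M['F_2]_s)) ((1%:M : 'M['F_2]_s) *t B^T).

Definition HZ {s : nat} (B : 'M['F_2]_s) : 'M['F_2]_(s * s, s * s + s * s) :=
  row_mx ((1%:M : 'M['F_2]_s) *t B) (B^T *t (1%:M : 'M['F_2]_s)).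

From HB Require Import structures.
From mathcomp Require Import all_boot all_algebra.
From mathcomp Require Import mxtens zify.
Set Implicit Arguments. Unset Strict Implicit. Unset Printing Implicit Defensive.
Import GRing.Theory.

(* Index the checks of H_X(B) by pairs (x, y) and its bits by a block tag and a
   pair (p, q).  Along a cycle of the Tanner graph every step changes exactly one
   coordinate of the check: a step through the block B (x) I changes x and keeps
   y, a step through I (x) B^T keeps x and changes y.  On a closed walk no
   coordinate can change exactly once, so on a walk of 2 or 3 steps one of the
   coordinates never changes; the cycle then projects to a cycle of the same
   length in the Tanner graph of B or of B^T.  For H_Z the blocks are swapped. *)

Section CyclicOrdinals.
Variable l : nat.
Implicit Types i j : 'I_l.

Lemma ordS_neq i : 1 < l -> ordS i != i.
Proof.
move=> l_gt1; apply/eqP => /(congr1 val) /=.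
have [iS_lt | iS_eq] : i.+1 < l \/ i.+1 = l by have := ltn_ord i; lia.
- by rewrite modn_small //; lia.
- by rewrite iS_eq modnn; lia.
Qed.

Lemma val_iter_ordS m i : iter m (@ordS l) i = (i + m) %% l :> nat.
Proof.
elim: m => [|m IHm] /=; first by rewrite addn0 modn_small.
by rewrite IHm -addn1 modnDml addn1 addnS.
Qed.

Lemma ordS_stable_but_one_const (T : Type) (f : 'I_l -> T) i :
  (forall j, j != i -> f (ordS j) = f j) -> forall j, f j = f (ordS i).
Proof.
move=> f_stable.
have walk m : m < l -> f (iter m.+1 (@ordS l) i) = f (ordS i).
  elim: m => [//|m IHm] m_lt; rewrite iterS f_stable ?IHm ?(ltnW m_lt) //.
  apply/eqP => /(congr1 (@nat_of_ord l)); rewrite val_iter_ordS => /eqP.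
  rewrite -[X in _ == X](modn_small (ltn_ord i)) -[X in _ == X %% l]addn0.
  by rewrite eqn_modDl mod0n modn_small.
move=> j; set m := (j + l - i.+1) %% l.
have -> : j = iter m.+1 (@ordS l) i.
  apply: ord_inj; rewrite val_iter_ordS addnS -addSn modnDmr subnKC.
    by rewrite modnDr modn_small.
  by rewrite (leq_trans (ltn_ord i)) ?leq_addl.
by rewrite walk // ltn_pmod // (leq_ltn_trans _ (ltn_ord i)).
Qed.

Definition moves (T : eqType) (f : 'I_l -> T) : {set 'I_l} :=
  [set i | f (ordS i) != f i].

Lemma card_moves_neq1 (T : eqType) (f : 'I_l -> T) : #|moves f| != 1.
Proof.
apply/negP => /cards1P [k moves_k].
have : k \in moves f by rewrite moves_k set11.
rewrite inE => /eqP; apply; symmetry; apply: ordS_stable_but_one_const => j jk.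
by apply/eqP; move: (jk); rewrite -in_set1 -moves_k inE negbK.
Qed.

Lemma card_moves0 (T : eqType) (f : 'I_l -> T) :
  #|moves f| = 0 -> forall i, f (ordS i) = f i.
Proof. by move/cards0_eq => f0 i; apply/eqP/negbFE; rewrite -(in_set0 i) -f0 inE. Qed.

Lemma one_coordinate_fixed (T U : eqType) (f : 'I_l -> T) (g : 'I_l -> U) :
  l <= 3 -> (forall i, (f (ordS i) == f i) = (g (ordS i) != g i)) ->
  (forall i, f (ordS i) = f i) \/ (forall i, g (ordS i) = g i).
Proof.
move=> l_le3 one_moves.
have movesC : ~: moves f = moves g.
  by apply/setP => i; rewrite !inE one_moves negbK.
have := cardsC (moves f); rewrite movesC card_ord => card_fg.
have /eqP f_neq1 := card_moves_neq1 f; have /eqP g_neq1 := card_moves_neq1 g.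
have [/card_moves0 f_fixed | /card_moves0 g_fixed] :
  #|moves f| = 0 \/ #|moves g| = 0 by lia.
- by left.
- by right.
Qed.

End CyclicOrdinals.

Definition has_cycle (T U : Type) (l : nat) (E : T -> U -> bool) : Prop :=
  exists (r : 'I_l -> T) (c : 'I_l -> U),
    injective r /\ injective c /\ forall i, E (r i) (c i) /\ E (r (ordS i)) (c i).

Lemma has_cycle_flip (T U : Type) l (E : T -> U -> bool) :
  has_cycle l E -> has_cycle l (fun u t => E t u).
Proof.
move=> [r [c [r_inj [c_inj adj]]]].
exists c, (r \o ordS (n:=l)); split; [|split] => //.
- exact: inj_comp r_inj (@ordS_inj l).
- by move=> i /=; split; [case: (adj i) | case: (adj (ordS i))].
Qed.

Lemma has_cycle_map (T U T' U' : Type) l (E : T -> U -> bool) (E' : T' -> U' -> bool)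
    (f : T -> T') (g : U -> U') :
  injective f -> injective g -> (forall t u, E t u -> E' (f t) (g u)) ->
  has_cycle l E -> has_cycle l E'.
Proof.
move=> f_inj g_inj fgE [r [c [r_inj [c_inj adj]]]].
exists (f \o r), (g \o c); split; [|split].
- exact: inj_comp f_inj r_inj.
- exact: inj_comp g_inj c_inj.
- by move=> i /=; case: (adj i) => /fgE ? /fgE.
Qed.

(* The Tanner graph of [E1 (x) I | I (x) E2]: a bit is tagged [true] in the
   first block and [false] in the second. *)
Definition hprod_adj (X Y : eqType) (E1 : rel X) (E2 : rel Y)
    (r : X * Y) (c : bool * (X * Y)) : bool :=
  if c.1 then E1 r.1 c.2.1 && (r.2 == c.2.2) else (r.1 == c.2.1) && E2 r.2 c.2.2.

Lemma hprod_adj_swap (X Y : eqType) (E1 : rel X) (E2 : rel Y) r c :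
  hprod_adj E1 E2 r c = hprod_adj E2 E1 (swap_pair r) (~~ c.1, swap_pair c.2).
Proof. by rewrite /hprod_adj; case: c.1; rewrite andbC. Qed.

Lemma hprod_cycle_fst_fixed (X Y : eqType) (E1 : rel X) (E2 : rel Y) l
    (r : 'I_l -> X * Y) (c : 'I_l -> bool * (X * Y)) :
  1 < l -> injective r -> injective c ->
  (forall i, hprod_adj E1 E2 (r i) (c i) /\ hprod_adj E1 E2 (r (ordS i)) (c i)) ->
  (forall i, (r (ordS i)).1 = (r i).1) -> has_cycle l E2.
Proof.
move=> l_gt1 r_inj c_inj adj x_fixed.
have x_const i j : (r i).1 = (r j).1.
  have x_stable := ordS_stable_but_one_const (fun k _ => x_fixed k).
  by rewrite (x_stable i i) (x_stable i j).
have y_moves i : (r (ordS i)).2 != (r i).2.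
  apply: contra (ordS_neq i l_gt1) => /eqP y_eq; apply/eqP/r_inj.
  exact: injective_projections.
have {}adj i : ((r i).1 == (c i).2.1) && E2 (r i).2 (c i).2.2 /\
               ((r (ordS i)).1 == (c i).2.1) && E2 (r (ordS i)).2 (c i).2.2 /\
               (c i).1 = false.
  move: (adj i) (y_moves i); rewrite /hprod_adj; case: (c i).1.
  - by move=> [/andP [_ /eqP ->] /andP [_ /eqP ->]]; rewrite eqxx.
  - by move=> [-> ->].
exists (fun i => (r i).2), (fun i => (c i).2.2); split; [|split].
- by move=> i j y_eq; apply: r_inj; apply: injective_projections.
- move=> i j q_eq; apply: c_inj.
  have [/andP [/eqP xi _] [_ ki]] := adj i; have [/andP [/eqP xj _] [_ kj]] := adj j.
  apply: injective_projections; first by rewrite ki kj.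
  by apply: injective_projections; rewrite // -xi -xj.
- by move=> i; have [/andP [_ ->] [/andP [_ ->] _]] := adj i.
Qed.

Lemma hprod_cycle (X Y : eqType) (E1 : rel X) (E2 : rel Y) l :
  1 < l <= 3 -> has_cycle l (hprod_adj E1 E2) -> has_cycle l E1 \/ has_cycle l E2.
Proof.
case/andP => l_gt1 l_le3 [r [c [r_inj [c_inj adj]]]].
have one_moves i : ((r (ordS i)).1 == (r i).1) = ((r (ordS i)).2 != (r i).2).
  have r_moves : r (ordS i) != r i by rewrite (inj_eq r_inj) ordS_neq.
  move: (adj i); rewrite /hprod_adj; case: (c i).1.
  - move=> [/andP [_ /eqP y1] /andP [_ /eqP y2]]; rewrite y1 y2 eqxx /=.
    apply/negbTE; apply: contra r_moves => /eqP x_eq.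
    by apply/eqP/injective_projections; rewrite ?y1 ?y2.
  - move=> [/andP [/eqP x1 _] /andP [/eqP x2 _]]; rewrite x1 x2 eqxx /=.
    apply/esym; apply: contra r_moves => /eqP y_eq.
    by apply/eqP/injective_projections; rewrite ?x1 ?x2.
have [x_fixed | y_fixed] :=
  one_coordinate_fixed (f := fun i => (r i).1) (g := fun i => (r i).2) l_le3 one_moves.
- by right; exact: hprod_cycle_fst_fixed l_gt1 r_inj c_inj adj x_fixed.
- left; apply: (@hprod_cycle_fst_fixed _ _ E2 E1 _ (swap_pair \o r)
                 (fun i => (~~ (c i).1, swap_pair (c i).2))) => //.
  + by move=> i j /(can_inj swap_pairK) /r_inj.
  + move=> i j [/negb_inj k_eq q_eq p_eq]; apply: c_inj.
    by apply: injective_projections => //; apply: injective_projections.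
  + by move=> i; rewrite -!hprod_adj_swap.
Qed.

Lemma mulr_natb_eq1 (R : nzRingType) (a : R) (b : bool) :
  (a * b%:R == 1)%R = (a == 1%R) && b.
Proof. by rewrite mulrb; case: b; rewrite ?mulr1 ?mulr0 ?andbT ?andbF // eq_sym oner_eq0. Qed.

Lemma natb_mulr_eq1 (R : nzRingType) (a : R) (b : bool) :
  (b%:R * a == 1)%R = b && (a == 1%R).
Proof. by rewrite mulrb; case: b; rewrite ?mul1r ?mul0r // eq_sym oner_eq0. Qed.

Section TannerGraphs.
Variable k : nat.
Implicit Type B : 'M['F_2]_k.

Definition col_unindex (b : bool) (c : 'I_(k * k + k * k)) : bool * ('I_k * 'I_k) :=
  match split c with
  | inl u => (b, mxtens_unindex u)
  | inr u => (~~ b, mxtens_unindex u)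
  end.

Lemma col_unindex_inj b : injective (col_unindex b).
Proof.
move=> c c' /eqP; rewrite /col_unindex.
case: (split c) (splitK c) => u <-; case: (split c') (splitK c') => v <-;
  by rewrite xpair_eqE (can_eq (@mxtens_unindexK k k)); case: b => //= /eqP ->.
Qed.

Lemma tanner_adj_HX B r c :
  tanner_adj (HX B) r c =
  hprod_adj (tanner_adj B) (fun y q => tanner_adj B q y)
    (mxtens_unindex r) (col_unindex true c).
Proof.
rewrite /tanner_adj /HX /col_unindex /hprod_adj mxE.
by case: (split c) => u; rewrite !mxE /= ?mulr_natb_eq1 ?natb_mulr_eq1.
Qed.

Lemma tanner_adj_HZ B r c :
  tanner_adj (HZ B) r c =
  hprod_adj (fun x p => tanner_adj B p x) (tanner_adj B)
    (mxtens_unindex r) (col_unindex false c).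
Proof.
rewrite /tanner_adj /HZ /col_unindex /hprod_adj mxE.
by case: (split c) => u; rewrite !mxE /= ?mulr_natb_eq1 ?natb_mulr_eq1.
Qed.

Lemma hprod_tanner_cycle (H : 'M['F_2]_(k * k, k * k + k * k)) b
    (E1 E2 : rel 'I_k) l :
  (forall r c, tanner_adj H r c = hprod_adj E1 E2 (mxtens_unindex r) (col_unindex b c)) ->
  1 < l <= 3 -> has_simple_cycle l H -> has_cycle l E1 \/ has_cycle l E2.
Proof.
move=> adjH l_23 cycle; apply: hprod_cycle l_23 _.
apply: (has_cycle_map (f := @mxtens_unindex k k) (g := col_unindex b) _ _ _ cycle).
- exact: can_inj (@mxtens_unindexK k k).
- exact: col_unindex_inj.
- by move=> r c; rewrite adjH.
Qed.

Lemma no_4_6_cycles_HX B : no_4_6_cycles B -> no_4_6_cycles (HX B).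
Proof.
have cycle_HX l : 1 < l <= 3 -> has_simple_cycle l (HX B) -> has_simple_cycle l B.
  by move=> l_23 /(hprod_tanner_cycle (tanner_adj_HX B) l_23) [|/has_cycle_flip].
by case=> no4 no6; split => [/(cycle_HX 2 isT) | /(cycle_HX 3 isT)].
Qed.

Lemma no_4_6_cycles_HZ B : no_4_6_cycles B -> no_4_6_cycles (HZ B).
Proof.
have cycle_HZ l : 1 < l <= 3 -> has_simple_cycle l (HZ B) -> has_simple_cycle l B.
  by move=> l_23 /(hprod_tanner_cycle (tanner_adj_HZ B) l_23) [/has_cycle_flip|].
by case=> no4 no6; split => [/(cycle_HZ 2 isT) | /(cycle_HZ 3 isT)].
Qed.

End TannerGraphs.

Theorem mainTheorem2 (s : nat) (B : 'M['F_2]_s) :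
  (1 <= s)%N -> no_4_6_cycles B ->
  no_4_6_cycles (HX B) /\ no_4_6_cycles (HZ B).
Proof. by move=> _ noB; split; [apply: no_4_6_cycles_HX | apply: no_4_6_cycles_HZ]. Qed.
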